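(* Let $X$ be a finite topological space and $x,y\in X$ with $\Psi(x,y)=k$. If $(U_j)_{j\ge0}$ is any nested sequence of open sets around $x$ with $y\in U_k$, then $U_k=U_x\cup U_y$.
   Context: For a finite topological space $X$ and $x\in X$, $U_x$ denotes the minimal open set containing $x$ (the intersection of all open sets containing $x$). A nested sequence of open sets around $x$ is a finite sequence $U_0\subsetneq U_1\subsetneq\cdots\subsetneq U_m=X$ of open sets with $U_0=U_x$ such that for each $j$ there is no open set $V$ with $U_j\subsetneq V\subsetneq U_{j+1}$. The furtherness function $\Psi:X\times X\to\{0,1,\dots,|X|-1\}$ is defined by: $\Psi(x,y)$ is the smallest integer $k\ge 0$ such that there exists a nested sequence $(U_j)_{j\ge0}$ of open sets around $x$ with $y\in U_k$. *)

(* A finite topological space is a finType T together with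
   its family of open sets O : {set {set T}}. *)
From mathcomp Require Import all_boot.
Set Implicit Arguments. Unset Strict Implicit. Unset Printing Implicit Defensive.

Section FiniteTop.
Variable T : finType.

(* O is a topology on the (finite) set T: contains the empty and full sets and
   is closed under (binary, hence all finite = all) unions and intersections. *)
Definition is_topology (O : {set {set T}}) : Prop :=
  [/\ set0 \in O, setT \in O,
      (forall U V, U \in O -> V \in O -> U :|: V \in O) &
      (forall U V, U \in O -> V \in O -> U :&: V \in O)].

Definition minOpen (O : {set {set T}}) (x : T) : {set T} :=
  \bigcap_(U in O | x \in U) U.

Definition nested_seq (O : {set {set T}}) (x : T) (s : seq {set T}) : Prop :=
  [/\ 0 < size s,
      nth set0 s 0 = minOpen O x,
      last set0 s = setT,
      (forall j, j < size s -> nth set0 s j \in O) &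
      (forall j, j.+1 < size s ->
         nth set0 s j \proper nth set0 s j.+1 /\
         ~ (exists V, [/\ V \in O, nth set0 s j \proper V &
                          V \proper nth set0 s j.+1]))].

(* Psi(x,y) = k : k is the smallest integer such that some nested sequence
   (U_j) around x has y \in U_k. *)
Definition furtherness_is (O : {set {set T}}) (x y : T) (k : nat) : Prop :=
  (exists s, nested_seq O x s /\ k < size s /\ y \in nth set0 s k) /\
  (forall s k', nested_seq O x s -> k' < size s -> y \in nth set0 s k' ->
     k <= k').

End FiniteTop.

(* The open sets of a finite space form a finite distributive lattice, and a
   nested sequence around x is a maximal chain of covers from U_x to X.
   Induct on k = Psi(x,y) along the chain U_x = A, B, ... : by minimality of
   k, the chain starting at B first meets y at the set B ∪ U_y, so it suffices
   to show B ⊆ A ∪ U_y.  If not, then A ∪ U_y is covered by B ∪ U_y, and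
   intersecting the chain segment from B to B ∪ U_y with the open set A ∪ U_y
   gives, after removing repetitions, a chain of covers from A to A ∪ U_y that
   is no longer.  Continuing through B ∪ U_y yields a nested sequence meeting y
   strictly earlier, contradicting minimality. *)
From mathcomp Require Import all_boot.

Set Implicit Arguments.
Unset Strict Implicit.
Unset Printing Implicit Defensive.

Lemma path_shorten_refl (A : eqType) (r : rel A) a p :
  path (fun u v => (u == v) || r u v) a p ->
  exists q, [/\ path r a q, last a q = last a p & size q <= size p].
Proof.
elim: p a => [|b p IH] a /=; first by exists [::].
case/andP=> /predU1P[<- | rab] /IH[q [Pq Lq Sq]].
  by exists q; split=> //; apply: leqW.
by exists (b :: q); rewrite /= rab Pq Lq.
Qed.

Section CoverChains.

Variables (T : finType) (O : {set {set T}}).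
Hypothesis topO : is_topology O.

Definition covers (A B : {set T}) : bool :=
  [&& A \in O, B \in O, A \proper B &
      [forall V, ~~ [&& V \in O, A \proper V & V \proper B]]].

Definition cover_chain (A : {set T}) (s : seq {set T}) : bool :=
  path covers A s && (last A s == setT).

Lemma coversP A B :
  reflect [/\ A \in O, B \in O, A \proper B &
              forall W, W \in O -> A \subset W -> W \subset B -> W = A \/ W = B]
          (covers A B).
Proof.
apply: (iffP and4P) => [[AO BO AB /forallP noV] | [AO BO AB mid]].
  split=> // W WO AW WB.
  have [-> | nWA] := eqVneq W A; first by left.
  have [-> | nWB] := eqVneq W B; first by right.
  by move: (noV W); rewrite WO !properEneq eq_sym nWA AW nWB WB.
split=> //; apply/forallP=> W; apply/negP=> /and3P[WO AW WB].
by case: (mid W WO (proper_sub AW) (proper_sub WB)) => eW;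
  [move: AW | move: WB]; rewrite eW properxx.
Qed.

Lemma cover_chain_cons A B s :
  cover_chain A (B :: s) = covers A B && cover_chain B s.
Proof. by rewrite /cover_chain /= andbA. Qed.

Lemma minOpen_open y : minOpen O y \in O.
Proof.
case: topO => _ TO _ IO.
by apply: (big_ind (fun S => S \in O)) => // U /andP[].
Qed.

Lemma mem_minOpen y : y \in minOpen O y.
Proof. by apply/bigcapP=> U /andP[]. Qed.

Lemma minOpen_sub y U : U \in O -> y \in U -> minOpen O y \subset U.
Proof. by move=> UO yU; apply: (bigcap_inf U); rewrite UO yU. Qed.

Lemma covers_setI A B V :
  V \in O -> covers A B -> (A :&: V == B :&: V) || covers (A :&: V) (B :&: V).
Proof.
move=> VO /coversP[AO BO AB mid]; case: topO => _ _ UO IO.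
have [// | neAB] /= := eqVneq (A :&: V) (B :&: V).
apply/coversP; split; [exact: IO | exact: IO | |].
  by rewrite properEneq neAB setSI // proper_sub.
move=> W WO AW WB; have WBV := subset_trans WB (subsetIl B V).
have WV := subset_trans WB (subsetIr B V).
have WAB : W :|: A \subset B by rewrite subUset WBV proper_sub.
have [eA | eB] := mid _ (UO _ _ WO AO) (subsetUr W A) WAB.
  left; apply/eqP; rewrite eqEsubset AW andbT subsetI WV andbT.
  by rewrite -eA subsetUl.
right; apply/eqP; rewrite eqEsubset WB /= -eB setIUl.
by rewrite subUset (setIidPl WV) subxx.
Qed.

Lemma path_covers_setI A p V :
  V \in O -> path covers A p ->
  exists q, [/\ path covers (A :&: V) q, last (A :&: V) q = last A p :&: V
              & size q <= size p].
Proof.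
move=> VO Pp.
set f := fun Z => Z :&: V.
have /path_shorten_refl[q [Pq Lq Sq]] :
    path (fun u v => (u == v) || covers u v) (f A) (map f p).
  by elim: p A Pp => //= B p IH A /andP[AB /IH ->]; rewrite covers_setI.
by rewrite size_map in Sq; exists q; rewrite Lq last_map.
Qed.

Section CoverOutsideUnion.

Variables (A B W : {set T}).
Hypotheses (WO : W \in O) (AB : covers A B) (nBAW : ~~ (B \subset A :|: W)).

Lemma covers_setIU : B :&: (A :|: W) = A.
Proof.
case/coversP: AB => AO BO /proper_sub sAB mid; case: topO => _ _ UO IO.
have A_BAW : A \subset B :&: (A :|: W) by rewrite subsetI sAB subsetUl.
have [// | eB] := mid _ (IO _ _ BO (UO _ _ AO WO)) A_BAW (subsetIl B _).
by move: nBAW; rewrite -eB subsetIr.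
Qed.

(* Upper semimodularity of the distributive lattice of open sets. *)
Lemma covers_setU : covers (A :|: W) (B :|: W).
Proof.
case/coversP: AB => AO BO sAB mid; case: topO => _ _ UO IO.
have sAWBW : A :|: W \subset B :|: W by rewrite setSU // proper_sub.
apply/coversP; split; [exact: UO | exact: UO | |].
  rewrite properEneq sAWBW andbT; apply: contra nBAW => /eqP->.
  exact: subsetUl.
move=> V VO AWV VBW.
have AV := subset_trans (subsetUl A W) AWV.
have WV := subset_trans (subsetUr A W) AWV.
have A_VB : A \subset V :&: B by rewrite subsetI AV proper_sub.
have [eA | eB] := mid _ (IO _ _ VO BO) A_VB (subsetIr V B).
  left; apply/eqP; rewrite eqEsubset AWV andbT.
  by rewrite -(setIidPl VBW) setIUr eA (setIidPr WV).
right; apply/eqP; rewrite eqEsubset VBW /= subUset WV andbT.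
by rewrite -eB subsetIl.
Qed.

Lemma cover_path_to_setU s :
  path covers B s -> last B s = B :|: W ->
  exists q, [/\ path covers A q, last A q = A :|: W & size q <= size s].
Proof.
have AWO : A :|: W \in O.
  by case: topO => _ _ UO _; apply: UO => //; case/coversP: AB.
move=> Ps Ls; have [q [Pq Lq Sq]] := path_covers_setI AWO Ps.
exists q; move: Pq Lq; rewrite covers_setIU Ls => Pq ->; split=> //.
by apply/setIidPr/setSU; case/coversP: AB => _ _ /proper_sub.
Qed.

End CoverOutsideUnion.

Lemma nth_cover_chain_first_hit y k A s :
  A \in O -> cover_chain A s -> k <= size s -> y \in nth set0 (A :: s) k ->
  (forall t j, cover_chain A t -> j <= size t -> y \in nth set0 (A :: t) j ->
     k <= j) ->
  nth set0 (A :: s) k = A :|: minOpen O y.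
Proof.
elim: k A s => [|k IH] A s AO chs ks yk kmin.
  by apply/esym/setUidPl; apply: minOpen_sub.
case: s chs ks yk kmin => [|B s] // chs ks yk kmin.
move: (chs); rewrite cover_chain_cons => /andP[AB chB].
have BO : B \in O by case/coversP: AB.
have eC : nth set0 (B :: s) k = B :|: minOpen O y.
  apply: IH => // t j cht jt yj.
  by apply: (kmin (B :: t) j.+1); rewrite ?cover_chain_cons ?AB.
have sAB : A \subset B by case/coversP: AB => _ _ /proper_sub.
rewrite /= eC; apply/eqP; rewrite eqEsubset (setSU _ sAB) andbT.
rewrite subUset subsetUr andbT; apply: contraT => nBAW.
have UyO := minOpen_open y.
set C := B :|: minOpen O y; set s1 := take k s; set s2 := drop k s.
have es : s = s1 ++ s2 by rewrite cat_take_drop.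
have sz1 : size s1 = k by rewrite size_take_min; apply/minn_idPl.
have L1 : last B s1 = C.
  by rewrite /C -eC es (last_nth set0) -cat_cons nth_cat /= sz1 ltnSn.
move: chB; rewrite /cover_chain es cat_path last_cat L1.
case/andP=> /andP[P1 P2] LC.
have [q [Pq Lq Sq]] := cover_path_to_setU UyO AB nBAW P1 L1.
have chq : cover_chain A (q ++ C :: s2).
  by rewrite /cover_chain cat_path last_cat Lq /= Pq covers_setU // P2.
have := kmin _ (size q) chq.
rewrite size_cat leq_addr -cat_cons nth_cat /= ltnSn -(last_nth set0) Lq.
rewrite in_setU mem_minOpen orbT => /(_ isT isT).
by rewrite sz1 in Sq; move/leq_trans/(_ Sq); rewrite ltnn.
Qed.

Lemma nested_seqP x s :
  nested_seq O x s <->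
  exists2 t, s = minOpen O x :: t & cover_chain (minOpen O x) t.
Proof.
split=> [[s0 s_0 s_last s_open s_step] | [t -> cht]].
  case: s s0 s_0 s_last s_open s_step => [|a t] // _ /= -> s_last s_open s_step.
  exists t => //; rewrite /cover_chain s_last eqxx andbT.
  apply/(pathP set0) => i it; have [prop noV] := s_step i it.
  apply/and4P; split; [exact: s_open (ltnW it) | exact: s_open i.+1 it | by [] |].
  apply/forallP=> V; apply/negP=> /and3P[VO p1 p2]; apply: noV.
  by exists V.
move: cht => /andP[/(pathP set0) Pt /eqP Lt]; split=> //.
  case=> [|j] jt; first exact: minOpen_open.
  by case/coversP: (Pt j jt).
move=> j jt; have /and4P[_ _ prop /forallP noV] := Pt j jt.
split=> // -[V [VO p1 p2]].
by move: (noV V); rewrite VO p1 p2.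
Qed.

End CoverChains.

Theorem mainTheorem5 (T : finType) (O : {set {set T}}) (x y : T) (k : nat)
  (s : seq {set T}) :
  is_topology O ->
  furtherness_is O x y k ->
  nested_seq O x s ->
  k < size s ->
  y \in nth set0 s k ->
  nth set0 s k = minOpen O x :|: minOpen O y.
Proof.
move=> topO [_ kmin] /(nested_seqP topO)[t -> cht] ks yk.
apply: nth_cover_chain_first_hit => //; first exact: minOpen_open.
move=> t' j cht' jt' yj; apply: (kmin (minOpen O x :: t') j) => //.
by apply/(nested_seqP topO); exists t'.
Qed.
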